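(* Let $s_\theta$ be the Sturmian word of irrational slope $\theta\in(0,1)$. For every $m\ge1$, every $1\le k\le m$, and every ordered partition $P_k=(p_1,\dots,p_k)$ of $m$, the set $\mathcal{L}_{(m,k)}$ of $P_k$-partitioned factors of length $m$ of $s_\theta$ admits exactly $k+1$ varieties.
   Context: For irrational $\theta\in(0,1)$, $s_\theta=s_0s_1s_2\cdots$ is the infinite word over $\{a<b\}$ with $s_n=a$ if $\{n\theta\}\in[0,1-\theta)$ and $s_n=b$ if $\{n\theta\}\in[1-\theta,1)$, where $\{x\}$ denotes the fractional part. A factor of length $m$ is a word $s_j\cdots s_{j+m-1}$, $j\ge0$; $\mathcal{L}_m$ is the set of factors of length $m$. For an ordered partition $P_k=(p_1,\dots,p_k)$ of $m$ (positive integers summing to $m$), $\mathcal{L}_{(m,k)}$ is the set of factorizations $u=u_1\cdots u_k$, $|u_i|=p_i$, of the $u\in\mathcal{L}_m$. The height profile of $u$ is $\langle |u_1|_b,\dots,|u_k|_b\rangle$ ($|v|_b$ = number of $b$'s in $v$); partitioned factors with equal height profiles are of the same variety, and varieties are the equivalence classes. *)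

From Stdlib Require Import Reals List Arith.
Import ListNotations.
Open Scope R_scope.

Definition irrational (theta : R) : Prop :=
  forall (p q : Z), q <> 0%Z -> theta <> IZR p / IZR q.

(* Letters: false = a, true = b (a < b). *)
Definition sturm (theta : R) (n : nat) : bool :=
  if Rle_dec (1 - theta) (frac_part (INR n * theta)) then true else false.

Definition factor (theta : R) (j m : nat) : list bool :=
  map (fun i => sturm theta (j + i)) (seq 0 m).

Fixpoint split_by (P : list nat) (u : list bool) : list (list bool) :=
  match P with
  | [] => []
  | p :: P' => firstn p u :: split_by P' (skipn p u)
  end.

Definition count_b (v : list bool) : nat := count_occ Bool.bool_dec v true.

Definition height_profile (P : list nat) (u : list bool) : list nat :=
  map count_b (split_by P u).

Definition ordered_partition (P : list nat) (m : nat) : Prop :=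
  Forall (fun p => (0 < p)%nat) P /\ list_sum P = m.

(* The set of varieties of L_(m,k): the set of height profiles occurring.
   It has exactly n elements iff it is enumerated by a duplicate-free list of length n. *)
Definition num_varieties_is (theta : R) (P : list nat) (m n : nat) : Prop :=
  exists L : list (list nat),
    NoDup L /\ length L = n /\
    forall h : list nat,
      In h L <-> exists j : nat, height_profile P (factor theta j m) = h.

(* Write x_j = {j theta}. The factor s_a ... s_(a+p-1) contains
   floor((a+p) theta) - floor(a theta) letters b, and
   floor((j+c) theta) = floor(j theta) + floor(c theta) + [x_j >= 1 - {c theta}].
   So with cut points c_i = p_1 + ... + p_i, the height profile of the factor at j
   determines and is determined by the set of thresholds 1 - {c_i theta} lying
   below x_j. By irrationality these k thresholds are distinct points of (0,1),
   so that set is determined by its size, and by the density of (x_j) every size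
   0, ..., k occurs. *)

From Stdlib Require Import Reals List Arith Lia ZArith Lra Classical ClassicalEpsilon.
Import ListNotations.
Open Scope R_scope.

Lemma frac_part_unique (x y : R) (z : Z) : 0 <= y < 1 -> x = IZR z + y -> frac_part x = y.
Proof. intros Hy Hx. symmetry. exact (proj2 (Int_part_frac_part_spec x z y Hy Hx)). Qed.

Definition orbit (theta : R) (j : nat) : R := frac_part (INR j * theta).

Definition threshold (theta : R) (c : nat) : R := 1 - frac_part (INR c * theta).

(* [carry theta x c] tells whether [x + {c theta}] reaches 1. *)
Definition carry (theta x : R) (c : nat) : bool :=
  if Rle_dec (threshold theta c) x then true else false.

Lemma carry_true (theta x : R) (c : nat) : carry theta x c = true <-> threshold theta c <= x.
Proof. unfold carry. destruct Rle_dec; split; easy. Qed.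

Lemma carry_monotone (theta x y : R) (c : nat) :
  x <= y -> carry theta x c = true -> carry theta y c = true.
Proof. rewrite !carry_true. lra. Qed.

Lemma carry_zero (theta x : R) : x < 1 -> carry theta x 0 = false.
Proof.
  intros Hx. unfold carry, threshold.
  rewrite (frac_part_unique (INR 0 * theta) 0 0) by (simpl; lra).
  destruct Rle_dec; [lra | reflexivity].
Qed.

Lemma Int_part_add_carry (theta : R) (j c : nat) :
  Int_part (INR (j + c) * theta) =
  (Int_part (INR j * theta) + Int_part (INR c * theta)
   + Z.b2z (carry theta (orbit theta j) c))%Z.
Proof.
  rewrite plus_INR, Rmult_plus_distr_r. unfold carry, threshold, orbit.
  destruct Rle_dec; simpl.
  - apply plus_Int_part1. lra.
  - rewrite Z.add_0_r. apply plus_Int_part2. lra.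
Qed.

Lemma sturm_carry (theta : R) (n : nat) :
  0 < theta < 1 -> sturm theta n = carry theta (orbit theta n) 1.
Proof.
  intros Ht. unfold sturm, carry, threshold, orbit.
  rewrite (frac_part_unique (INR 1 * theta) theta 0) by (simpl; lra).
  reflexivity.
Qed.

Lemma Int_part_succ (theta : R) (n : nat) : 0 < theta < 1 ->
  Int_part (INR (S n) * theta) = (Int_part (INR n * theta) + Z.b2z (sturm theta n))%Z.
Proof.
  intros Ht. rewrite <- Nat.add_1_r, Int_part_add_carry, sturm_carry by exact Ht.
  rewrite <- (proj1 (Int_part_frac_part_spec (INR 1 * theta) 0 theta ltac:(lra) ltac:(simpl; lra))).
  lia.
Qed.
Section Irrational.

Variable theta : R.
Hypothesis Hirr : irrational theta.

Lemma mult_not_integer (c : nat) (z : Z) : (1 <= c)%nat -> INR c * theta <> IZR z.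
Proof.
  intros Hc E. apply (Hirr z (Z.of_nat c)); [lia |].
  rewrite <- INR_IZR_INZ, <- E. field. apply not_0_INR. lia.
Qed.

Lemma orbit_neq0 (c : nat) : (1 <= c)%nat -> orbit theta c <> 0.
Proof.
  intros Hc E. apply (mult_not_integer c (Int_part (INR c * theta)) Hc).
  rewrite (Rplus_Int_part_frac_part (INR c * theta)) at 1. unfold orbit in E. rewrite E. ring.
Qed.

Lemma orbit_inj (c c' : nat) : orbit theta c = orbit theta c' -> c = c'.
Proof.
  assert (Hlt : forall a b : nat, (b < a)%nat -> orbit theta a <> orbit theta b).
  { intros a b Hab E.
    apply (mult_not_integer (a - b) (Int_part (INR a * theta) - Int_part (INR b * theta)));
      [lia |].
    rewrite minus_INR, minus_IZR, Rmult_minus_distr_r by lia.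
    rewrite (Rplus_Int_part_frac_part (INR a * theta)) at 1.
    rewrite (Rplus_Int_part_frac_part (INR b * theta)) at 1.
    unfold orbit in E. rewrite E. ring. }
  intros E. destruct (Nat.lt_trichotomy c c') as [H | [H | H]]; [| exact H |];
    exfalso; [apply (Hlt c' c) | apply (Hlt c c')]; auto.
Qed.

End Irrational.

Lemma pigeonhole (n : nat) (f : nat -> nat) :
  (forall i, (i <= n)%nat -> (f i < n)%nat) ->
  exists i j, (i < j <= n)%nat /\ f i = f j.
Proof.
  intros Hf. apply NNPP. intros Hno.
  assert (Hnd : NoDup (map f (seq 0 (S n)))).
  { apply NoDup_map_NoDup_ForallPairs; [| apply seq_NoDup].
    intros a b Ha Hb E. apply in_seq in Ha, Hb.
    destruct (Nat.lt_trichotomy a b) as [Hab | [Hab | Hab]]; [| exact Hab |];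
      exfalso; apply Hno; [exists a, b | exists b, a]; split; auto; lia. }
  apply (NoDup_incl_length (l' := seq 0 n)) in Hnd.
  - rewrite length_map, !length_seq in Hnd. lia.
  - intros y Hy. apply in_map_iff in Hy as [i [<- Hi]]. apply in_seq in Hi.
    apply in_seq. specialize (Hf i ltac:(lia)). lia.
Qed.

Lemma Int_part_nat_bound (y : R) (N : nat) :
  0 <= y < INR N -> (0 <= Int_part y < Z.of_nat N)%Z.
Proof.
  intros Hy. destruct (base_Int_part y) as [B1 B2]. rewrite INR_IZR_INZ in Hy.
  split.
  - apply Z.lt_succ_r, lt_IZR. rewrite succ_IZR. lra.
  - apply lt_IZR. lra.
Qed.

Lemma dirichlet_approximation (theta : R) (N : nat) : (1 <= N)%nat ->
  exists q, (1 <= q)%nat /\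
    (INR N * orbit theta q < 1 \/ INR N * (1 - orbit theta q) < 1).
Proof.
  intros HN.
  assert (Hrange : forall i, 0 <= INR N * orbit theta i < INR N).
  { intros i. pose proof (base_fp (INR i * theta)). unfold orbit.
    assert (0 < INR N) by (apply lt_0_INR; lia). split; nra. }
  pose (bucket i := Int_part (INR N * orbit theta i)).
  destruct (pigeonhole N (fun i => Z.to_nat (bucket i))) as [i [j [Hij E]]].
  { intros i _. pose proof (Int_part_nat_bound _ _ (Hrange i)). unfold bucket. lia. }
  assert (Hclose : Rabs (INR N * orbit theta j - INR N * orbit theta i) < 1).
  { pose proof (Int_part_nat_bound _ _ (Hrange i)).
    pose proof (Int_part_nat_bound _ _ (Hrange j)).
    unfold bucket in E. assert (Eb : Int_part (INR N * orbit theta i) =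
      Int_part (INR N * orbit theta j)) by lia.
    destruct (base_Int_part (INR N * orbit theta i)).
    destruct (base_Int_part (INR N * orbit theta j)).
    rewrite Eb in *. apply Rabs_def1; lra. }
  exists (j - i)%nat. split; [lia |].
  assert (Ediff : INR (j - i) * theta = INR j * theta - INR i * theta)
    by (rewrite minus_INR by lia; ring).
  unfold orbit in *. rewrite Ediff.
  destruct (Rle_lt_dec (frac_part (INR i * theta)) (frac_part (INR j * theta))).
  - left. rewrite Rminus_fp1 by lra. apply Rabs_def2 in Hclose. lra.
  - right. rewrite Rminus_fp2 by lra. apply Rabs_def2 in Hclose. lra.
Qed.

Lemma multiple_in_window (a eps : R) : 0 <= a -> 0 < eps ->
  exists n : nat, a < INR n * eps <= a + eps.
Proof.
  intros Ha He.
  destruct (base_Int_part (a / eps)) as [B1 B2].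
  assert (Hpos : (0 <= Int_part (a / eps))%Z).
  { apply Z.lt_succ_r, lt_IZR. rewrite succ_IZR.
    assert (0 <= a / eps) by (unfold Rdiv; apply Rmult_le_pos; [lra | left; apply Rinv_0_lt_compat; lra]). lra. }
  exists (Z.to_nat (Int_part (a / eps) + 1)).
  rewrite INR_IZR_INZ, Z2Nat.id, plus_IZR by lia.
  assert (a = a / eps * eps) by (field; lra).
  split; nra.
Qed.

Lemma orbit_mult (theta : R) (n q : nat) (z : Z) (y : R) :
  0 <= y < 1 -> INR n * orbit theta q = IZR z + y -> orbit theta (n * q) = y.
Proof.
  intros Hy E. unfold orbit in *.
  apply (frac_part_unique _ _ (Z.of_nat n * Int_part (INR q * theta) + z)); [exact Hy |].
  rewrite plus_IZR, mult_IZR, <- INR_IZR_INZ, mult_INR, Rmult_assoc.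
  rewrite (Rplus_Int_part_frac_part (INR q * theta)) at 1.
  rewrite Rmult_plus_distr_l. lra.
Qed.

Lemma orbit_dense (theta : R) (Hirr : irrational theta) (a b : R) :
  0 <= a < b -> b <= 1 -> exists j : nat, a < orbit theta j < b.
Proof.
  intros Hab Hb.
  destruct (archimed (1 / (b - a))) as [A1 _].
  assert (Hup : (0 < up (1 / (b - a)))%Z).
  { apply lt_IZR. assert (0 < 1 / (b - a)) by (apply Rdiv_lt_0_compat; lra). simpl. lra. }
  set (N := Z.to_nat (up (1 / (b - a)))).
  assert (HN : INR N * (b - a) > 1).
  { unfold N. rewrite INR_IZR_INZ, Z2Nat.id by lia.
    assert (1 = 1 / (b - a) * (b - a)) by (field; lra). nra. }
  destruct (dirichlet_approximation theta N ltac:(unfold N; lia)) as [q [Hq Hs]].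
  assert (HNpos : 0 < INR N) by (apply lt_0_INR; unfold N; lia).
  pose proof (base_fp (INR q * theta)) as Fb.
  pose proof (orbit_neq0 theta Hirr q Hq) as Hd0. unfold orbit in Hs, Hd0.
  set (d := frac_part (INR q * theta)) in *.
  destruct Hs as [Hs | Hs].
  - assert (Hd : d < b - a) by nra.
    destruct (multiple_in_window a d) as [n Hn]; [lra | lra |].
    exists (n * q)%nat. rewrite (orbit_mult theta n q 0 (INR n * d)); [lra | lra |].
    unfold orbit. fold d. simpl. ring.
  - assert (Hd : 1 - d < b - a) by nra.
    destruct (multiple_in_window (1 - b) (1 - d)) as [n Hn]; [lra | lra |].
    exists (n * q)%nat. rewrite (orbit_mult theta n q (Z.of_nat n - 1) (1 - INR n * (1 - d))).
    + lra.
    + lra.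
    + unfold orbit. fold d. rewrite minus_IZR, <- INR_IZR_INZ. simpl. ring.
Qed.

Lemma count_b_app (u v : list bool) : count_b (u ++ v) = (count_b u + count_b v)%nat.
Proof. apply count_occ_app. Qed.

Lemma count_b_cons (b : bool) (u : list bool) :
  count_b (b :: u) = (Nat.b2n b + count_b u)%nat.
Proof. destruct b; unfold count_b; simpl; reflexivity. Qed.

Lemma factor_S (theta : R) (j m : nat) :
  factor theta j (S m) = sturm theta j :: factor theta (S j) m.
Proof.
  unfold factor. simpl. rewrite <- seq_shift, map_map, Nat.add_0_r. f_equal.
  apply map_ext. intros i. f_equal. lia.
Qed.

Lemma factor_app (theta : R) (j p q : nat) :
  factor theta j (p + q) = factor theta j p ++ factor theta (j + p) q.
Proof.
  revert j. induction p as [| p IH]; intros j.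
  - rewrite Nat.add_0_r. reflexivity.
  - rewrite Nat.add_succ_l, !factor_S, IH, <- app_comm_cons.
    rewrite Nat.add_succ_r. reflexivity.
Qed.

Lemma length_factor (theta : R) (j m : nat) : length (factor theta j m) = m.
Proof. unfold factor. rewrite length_map, length_seq. reflexivity. Qed.

Lemma height_profile_factor_cons (theta : R) (j p : nat) (P : list nat) :
  height_profile (p :: P) (factor theta j (p + list_sum P)) =
  count_b (factor theta j p) :: height_profile P (factor theta (j + p) (list_sum P)).
Proof.
  unfold height_profile. simpl. rewrite factor_app, firstn_app, skipn_app, length_factor.
  rewrite Nat.sub_diag, firstn_all2, skipn_all2 by (rewrite length_factor; lia).
  rewrite app_nil_r. reflexivity.
Qed.

Lemma count_b_factor (theta : R) (a p : nat) : 0 < theta < 1 ->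
  Z.of_nat (count_b (factor theta a p)) =
  (Int_part (INR (a + p) * theta) - Int_part (INR a * theta))%Z.
Proof.
  intros Ht. induction p as [| p IH].
  - rewrite Nat.add_0_r, Z.sub_diag. reflexivity.
  - rewrite <- Nat.add_1_r, factor_app, count_b_app, Nat.add_assoc, Nat.add_1_r.
    rewrite Int_part_succ by exact Ht.
    unfold factor at 2. simpl. rewrite count_b_cons, !Nat.add_0_r.
    destruct (sturm theta (a + p)); simpl; lia.
Qed.

Lemma count_b_factor_carry (theta : R) (j c p : nat) : 0 < theta < 1 ->
  Z.of_nat (count_b (factor theta (j + c) p)) =
  (Int_part (INR (c + p) * theta) - Int_part (INR c * theta)
   + Z.b2z (carry theta (orbit theta j) (c + p))
   - Z.b2z (carry theta (orbit theta j) c))%Z.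
Proof.
  intros Ht. rewrite count_b_factor by exact Ht.
  rewrite <- Nat.add_assoc, !Int_part_add_carry. lia.
Qed.

Fixpoint cut_points (P : list nat) (c : nat) : list nat :=
  match P with
  | [] => []
  | p :: P' => (c + p)%nat :: cut_points P' (c + p)
  end.

Lemma length_cut_points (P : list nat) (c : nat) : length (cut_points P c) = length P.
Proof. revert c. induction P as [| p P IH]; intros c; simpl; auto. Qed.

Lemma cut_points_gt (P : list nat) (c : nat) : Forall (fun p => (0 < p)%nat) P ->
  forall x, In x (cut_points P c) -> (c < x)%nat.
Proof.
  revert c. induction P as [| p P IH]; intros c HP x Hx; [destruct Hx |].
  inversion HP as [| ? ? Hp HP']; subst.
  destruct Hx as [<- | Hx]; [lia |].
  specialize (IH (c + p)%nat HP' x Hx). lia.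
Qed.

Lemma cut_points_NoDup (P : list nat) (c : nat) : Forall (fun p => (0 < p)%nat) P ->
  NoDup (cut_points P c).
Proof.
  revert c. induction P as [| p P IH]; intros c HP; simpl; [constructor |].
  inversion HP as [| ? ? Hp HP']; subst. constructor; [| auto].
  intros Hin. apply cut_points_gt in Hin; [lia | exact HP'].
Qed.

Lemma height_profile_shift_eq_iff (theta : R) (P : list nat) (c j j' : nat) :
  0 < theta < 1 ->
  carry theta (orbit theta j) c = carry theta (orbit theta j') c ->
  height_profile P (factor theta (j + c) (list_sum P)) =
  height_profile P (factor theta (j' + c) (list_sum P)) <->
  map (carry theta (orbit theta j)) (cut_points P c) =
  map (carry theta (orbit theta j')) (cut_points P c).
Proof.
  intros Ht. revert c. induction P as [| p P IH]; intros c Hc; [simpl; tauto |].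
  simpl list_sum. rewrite !height_profile_factor_cons, <- !Nat.add_assoc. simpl map.
  pose proof (count_b_factor_carry theta j c p Ht) as Hj.
  pose proof (count_b_factor_carry theta j' c p Ht) as Hj'.
  split.
  - intros E. injection E as Ecount Erest.
    assert (Ecut : carry theta (orbit theta j) (c + p) = carry theta (orbit theta j') (c + p)).
    { apply (f_equal Z.of_nat) in Ecount. rewrite Hj, Hj', Hc in Ecount.
      destruct (carry theta (orbit theta j) (c + p)), (carry theta (orbit theta j') (c + p));
        simpl in Ecount; lia. }
    rewrite Ecut, (proj1 (IH _ Ecut) Erest). reflexivity.
  - intros E. injection E as Ecut Erest. f_equal.
    + apply Nat2Z.inj. rewrite Hj, Hj', Hc, Ecut. reflexivity.
    + apply (IH _ Ecut). exact Erest.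
Qed.

Lemma height_profile_eq_iff (theta : R) (P : list nat) (j j' : nat) :
  0 < theta < 1 ->
  height_profile P (factor theta j (list_sum P)) =
  height_profile P (factor theta j' (list_sum P)) <->
  map (carry theta (orbit theta j)) (cut_points P 0) =
  map (carry theta (orbit theta j')) (cut_points P 0).
Proof.
  intros Ht. rewrite <- (Nat.add_0_r j), <- (Nat.add_0_r j') at 1.
  apply height_profile_shift_eq_iff; [exact Ht |].
  rewrite !carry_zero by (apply base_fp). reflexivity.
Qed.

Lemma count_b_map_le {A : Type} (f g : A -> bool) (l : list A) :
  (forall a, f a = true -> g a = true) -> (count_b (map f l) <= count_b (map g l))%nat.
Proof.
  intros Hfg. induction l as [| a l IH]; simpl; [lia |].
  rewrite !count_b_cons.
  destruct (f a) eqn:Ef; [rewrite (Hfg a Ef) |]; destruct (g a); simpl; lia.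
Qed.

Lemma map_eq_of_count_b_eq {A : Type} (f g : A -> bool) (l : list A) :
  (forall a, f a = true -> g a = true) ->
  count_b (map f l) = count_b (map g l) -> map f l = map g l.
Proof.
  intros Hfg. induction l as [| a l IH]; simpl; [reflexivity |].
  rewrite !count_b_cons. intros E.
  pose proof (count_b_map_le f g l Hfg).
  destruct (f a) eqn:Ef; [rewrite (Hfg a Ef) in * |]; destruct (g a); simpl in E;
    f_equal; try apply IH; lia.
Qed.

Definition carry_count (theta x : R) (cs : list nat) : nat := count_b (map (carry theta x) cs).

Lemma carry_count_eq_iff (theta x y : R) (cs : list nat) :
  carry_count theta x cs = carry_count theta y cs <->
  map (carry theta x) cs = map (carry theta y) cs.
Proof.
  unfold carry_count. split; [| intros ->; reflexivity].
  destruct (Rle_lt_dec x y).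
  - apply map_eq_of_count_b_eq. intros c. apply carry_monotone. lra.
  - intros E. symmetry. apply map_eq_of_count_b_eq; [| auto].
    intros c. apply carry_monotone. lra.
Qed.

Lemma carry_count_le (theta x : R) (cs : list nat) : (carry_count theta x cs <= length cs)%nat.
Proof.
  unfold carry_count, count_b. rewrite <- (length_map (carry theta x) cs).
  apply count_occ_bound.
Qed.

Lemma threshold_gap (theta t : R) (cs : list nat) : t < 1 ->
  exists g, 0 < g /\ t + g <= 1 /\
    forall c, In c cs -> t < threshold theta c -> t + g <= threshold theta c.
Proof.
  intros Ht. induction cs as [| c cs IH].
  - exists (1 - t). repeat split; [lra | lra | intros c []].
  - destruct IH as [g [Hg [Hg1 Hgap]]].
    destruct (Rlt_dec t (threshold theta c)).
    + exists (Rmin g (threshold theta c - t)).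
      pose proof (Rmin_l g (threshold theta c - t)).
      pose proof (Rmin_r g (threshold theta c - t)).
      repeat split; [apply Rmin_glb_lt; lra | lra |].
      intros c' [<- | Hc'] Hlt; [lra |]. specialize (Hgap c' Hc' Hlt). lra.
    + exists g. repeat split; [lra | lra |].
      intros c' [<- | Hc'] Hlt; [lra | auto].
Qed.

Lemma carries_realized (theta t : R) (cs : list nat) : irrational theta -> 0 <= t < 1 ->
  exists j, map (carry theta (orbit theta j)) cs = map (carry theta t) cs.
Proof.
  intros Hirr Ht. destruct (threshold_gap theta t cs (proj2 Ht)) as [g [Hg [Hg1 Hgap]]].
  destruct (orbit_dense theta Hirr t (t + g)) as [j Hj]; [lra | lra |].
  exists j. apply map_ext_in. intros c Hc. unfold carry.
  destruct (Rle_dec (threshold theta c) t).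
  - destruct Rle_dec; [reflexivity | lra].
  - specialize (Hgap c Hc ltac:(lra)). destruct Rle_dec; [lra | reflexivity].
Qed.

Section Thresholds.

Variable theta : R.
Hypothesis Hirr : irrational theta.
Variable cs : list nat.
Hypothesis Hcs_NoDup : NoDup cs.
Hypothesis Hcs_pos : forall c, In c cs -> (1 <= c)%nat.

Lemma threshold_bounds (c : nat) : In c cs -> 0 < threshold theta c < 1.
Proof.
  intros Hc. pose proof (base_fp (INR c * theta)).
  pose proof (orbit_neq0 theta Hirr c (Hcs_pos c Hc)). unfold threshold, orbit in *. lra.
Qed.

Lemma threshold_level_inj (c c' : nat) : In c cs -> In c' cs ->
  carry_count theta (threshold theta c) cs = carry_count theta (threshold theta c') cs ->
  c = c'.
Proof.
  intros Hc Hc' E. apply carry_count_eq_iff in E.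
  assert (Hle : forall a b,
    carry theta (threshold theta a) b = carry theta (threshold theta b) b ->
    threshold theta b <= threshold theta a).
  { intros a b Eb. apply carry_true. rewrite Eb. apply carry_true. lra. }
  pose proof (Hle c c' (ext_in_map E c' Hc')).
  pose proof (Hle c' c (eq_sym (ext_in_map E c Hc))).
  apply (orbit_inj theta Hirr). unfold threshold, orbit in *. lra.
Qed.

Lemma threshold_levels_cover :
  incl (seq 1 (length cs)) (map (fun c => carry_count theta (threshold theta c) cs) cs).
Proof.
  apply NoDup_length_incl.
  - apply NoDup_map_NoDup_ForallPairs; [| exact Hcs_NoDup].
    intros c c' Hc Hc'. apply threshold_level_inj; assumption.
  - rewrite length_map, length_seq. reflexivity.
  - intros n Hn. apply in_map_iff in Hn as [c [<- Hc]]. apply in_seq.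
    split; [| pose proof (carry_count_le theta (threshold theta c) cs); lia].
    unfold carry_count, count_b.
    enough (count_occ Bool.bool_dec (map (carry theta (threshold theta c)) cs) true > 0)%nat
      by lia.
    apply count_occ_In, in_map_iff. exists c. split; [apply carry_true; lra | exact Hc].
Qed.

Lemma carry_count_surjective (n : nat) : (n <= length cs)%nat ->
  exists j, carry_count theta (orbit theta j) cs = n.
Proof.
  intros Hn. destruct n as [| n].
  - destruct (carries_realized theta 0 cs Hirr ltac:(lra)) as [j Hj].
    exists j. apply carry_count_eq_iff in Hj. rewrite Hj.
    unfold carry_count, count_b. apply count_occ_not_In. intros Hin.
    apply in_map_iff in Hin as [c [Hc Hin]]. apply carry_true in Hc.
    pose proof (threshold_bounds c Hin). lra.
  - assert (Hlevel : In (S n) (seq 1 (length cs))) by (apply in_seq; lia).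
    apply threshold_levels_cover, in_map_iff in Hlevel as [c [Hc Hin]].
    destruct (carries_realized theta (threshold theta c) cs Hirr) as [j Hj].
    { pose proof (threshold_bounds c Hin). lra. }
    exists j. rewrite <- Hc. apply carry_count_eq_iff. exact Hj.
Qed.

End Thresholds.

Lemma image_card_of_rank {A : Type} (prof : nat -> A) (rank : nat -> nat) (k : nat) :
  (forall j j', prof j = prof j' <-> rank j = rank j') ->
  (forall j, (rank j <= k)%nat) ->
  (forall n, (n <= k)%nat -> exists j, rank j = n) ->
  exists L : list A, NoDup L /\ length L = (k + 1)%nat /\
    forall h, In h L <-> exists j, prof j = h.
Proof.
  intros Hprof Hbound Hsurj.
  assert (Hchoice : forall n, exists j, (n <= k)%nat -> rank j = n).
  { intros n. destruct (le_dec n k) as [Hn | Hn].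
    - destruct (Hsurj n Hn) as [j Hj]. exists j. auto.
    - exists 0%nat. lia. }
  destruct (choice _ Hchoice) as [pick Hpick].
  exists (map (fun n => prof (pick n)) (seq 0 (k + 1))). repeat split.
  - apply NoDup_map_NoDup_ForallPairs; [| apply seq_NoDup].
    intros a b Ha Hb E. apply in_seq in Ha, Hb.
    apply Hprof in E. rewrite !Hpick in E by lia. exact E.
  - rewrite length_map, length_seq. reflexivity.
  - intros Hin. apply in_map_iff in Hin as [n [<- _]]. exists (pick n). reflexivity.
  - intros [j <-]. apply in_map_iff. exists (rank j). split.
    + apply Hprof. apply Hpick, Hbound.
    + apply in_seq. specialize (Hbound j). lia.
Qed.

Theorem mainTheorem4 (theta : R) (Htheta : 0 < theta < 1) (Hirr : irrational theta)
  (m k : nat) (P : list nat) (Hm : (1 <= m)%nat) (Hk : (1 <= k <= m)%nat)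
  (HP : ordered_partition P m) (HPk : length P = k) :
  num_varieties_is theta P m (k + 1).
Proof.
  destruct HP as [Hpos Hsum]. subst m k.
  set (cs := cut_points P 0).
  assert (Hcs : length cs = length P) by apply length_cut_points.
  apply (image_card_of_rank _ (fun j => carry_count theta (orbit theta j) cs)).
  - intros j j'. rewrite carry_count_eq_iff. apply height_profile_eq_iff, Htheta.
  - intros j. rewrite <- Hcs. apply carry_count_le.
  - intros n Hn. rewrite <- Hcs in Hn. apply carry_count_surjective; try assumption.
    + apply cut_points_NoDup, Hpos.
    + intros c Hc. apply (cut_points_gt P 0 Hpos c Hc).
Qed.
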